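(* Let $\tilde L$ be a minimum-size counterexample. Then there is a join-irreducible element $j$ of $\tilde L$ that is less than or equal to more than half of the meet-irreducible elements of $\tilde L$.
   Context: For a poset $P$, $x$ upper covers $y$ (and $y$ lower covers $x$) if $y<x$ with nothing strictly between. Join-irreducible: upper covers exactly one element; meet-irreducible: lower covers exactly one element. For $x\in P$, ${\uparrow}x=\{y: x\le y\}$. A counterexample is a finite lattice $L$ with $|L|>1$ in which every join-irreducible $j$ satisfies $|{\uparrow}j|>|L|/2$; a minimum-size counterexample is a counterexample $\tilde L$ such that no counterexample has fewer elements. *)

From HB Require Import structures.
From mathcomp Require Import all_boot all_order.
Set Implicit Arguments. Unset Strict Implicit. Unset Printing Implicit Defensive.
Import Order.TTheory.
Local Open Scope order_scope.

Definition covers d (P : finPOrderType d) (x y : P) : bool :=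
  (y < x) && [forall z : P, ~~ ((y < z) && (z < x))].

Definition join_irr d (P : finPOrderType d) (j : P) : bool :=
  #|[set y : P | covers j y]| == 1%N.

Definition meet_irr d (P : finPOrderType d) (m : P) : bool :=
  #|[set y : P | covers y m]| == 1%N.

Definition upset d (P : finPOrderType d) (x : P) : {set P} := [set y : P | x <= y].

(* counterexample: finite lattice with |L| > 1 in which every join-irreducible
   j satisfies |up j| > |L|/2, i.e. 2|up j| > |L| *)
Definition counterexample d (L : finLatticeType d) : Prop :=
  (1 < #|L|)%N /\ forall j : L, join_irr j -> (#|L| < 2 * #|upset j|)%N.

Definition min_counterexample d (L : finLatticeType d) : Prop :=
  counterexample L /\
  forall (d' : Order.disp_t) (L' : finLatticeType d'),
    (#|L'| < #|L|)%N -> ~ counterexample L'.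

From HB Require Import structures.
From mathcomp Require Import all_boot all_order.
Set Implicit Arguments. Unset Strict Implicit. Unset Printing Implicit Defensive.
Import Order.TTheory.
Local Open Scope order_scope.

(* Let M be the set of meet-irreducible elements of a finite lattice L and K its
   complement.  K contains the top and is closed under meets (a meet-irreducible
   element strictly below x and y is strictly below x `&` y), so it is a lattice;
   it is smaller than L because coatoms are meet-irreducible.  If L is a
   minimum-size counterexample, K is therefore not one.  K is not trivial: if the
   top were its only element, the top would be join-irreducible with a one-element
   up-set.  Hence K has a join-irreducible j' with |up j'| <= |K|/2.  A minimal
   j <= j' of L not below the lower cover of j' is join-irreducible in L and
   (up j) :&: K is exactly up j' in K.  As |up j| > (|K| + |M|)/2, the
   meet-irreducible part of up j exceeds |M|/2. *)

Section FinPOrder.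
Variables (d : Order.disp_t) (P : finPOrderType d).
Implicit Types (t x y z c j m u : P) (p : pred P).

Definition downset x : {set P} := [set y | y <= x].

Lemma card_downset_lt x y : x < y -> (#|downset x| < #|downset y|)%N.
Proof.
move=> xy; apply/proper_card/properP; split.
  by apply/subsetP=> z; rewrite !inE => /le_trans; apply; apply: ltW.
by exists y; rewrite !inE ?lexx // lt_geF.
Qed.

Lemma ex_minimal p x : p x -> exists2 m, p m & forall y, y < m -> ~~ p y.
Proof.
move=> px; case: (arg_minnP (fun z => #|downset z|) px) => m pm m_min.
by exists m => // y ym; apply/negP=> /m_min; rewrite leqNgt card_downset_lt.
Qed.

Lemma ex_maximal p x : p x -> exists2 m, p m & forall y, m < y -> ~~ p y.
Proof.
move=> px; case: (arg_maxnP (fun z => #|downset z|) px) => m pm m_max.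
by exists m => // y my; apply/negP=> /m_max /=; rewrite leqNgt card_downset_lt.
Qed.

Lemma lt_ex_upper_cover x z : z < x -> exists2 u, covers u z & u <= x.
Proof.
move=> zx; have /(@ex_minimal (fun u => (z < u) && (u <= x)))[u /andP[zu ux] u_min] :
  (z < x) && (x <= x) by rewrite zx lexx.
exists u => //; rewrite /covers zu; apply/forallP=> v; apply/negP=> /andP[zv vu].
by move: (u_min v vu); rewrite zv (le_trans (ltW vu) ux).
Qed.

Lemma lt_ex_lower_cover x z : z < x -> exists2 w, covers x w & z <= w.
Proof.
move=> zx; have /(@ex_maximal (fun w => (z <= w) && (w < x)))[w /andP[zw wx] w_max] :
  (z <= z) && (z < x) by rewrite lexx zx.
exists w => //; rewrite /covers wx; apply/forallP=> v; apply/negP=> /andP[wv vx].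
by move: (w_max v wv); rewrite vx (le_trans zw (ltW wv)).
Qed.

Lemma meet_irrP m : reflect (exists u, forall v, covers v m = (v == u)) (meet_irr m).
Proof.
apply: (iffP cards1P) => -[u Hu]; exists u.
  by move=> v; rewrite -in_set1 -Hu inE.
by apply/setP=> v; rewrite !inE Hu.
Qed.

Lemma join_irrP j : reflect (exists c, forall v, covers j v = (v == c)) (join_irr j).
Proof.
apply: (iffP cards1P) => -[c Hc]; exists c.
  by move=> v; rewrite -in_set1 -Hc inE.
by apply/setP=> v; rewrite !inE Hc.
Qed.

Lemma meet_irr_covers_eq m u v : meet_irr m -> covers u m -> covers v m -> u = v.
Proof. by case/meet_irrP=> w Hw; rewrite !Hw => /eqP-> /eqP->. Qed.

Lemma join_irr_covers_eq j c v : join_irr j -> covers j c -> covers j v -> c = v.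
Proof. by case/join_irrP=> w Hw; rewrite !Hw => /eqP-> /eqP->. Qed.

Lemma join_irr_lt_le_cover j c y : join_irr j -> covers j c -> y < j -> y <= c.
Proof.
move=> jJ jc /lt_ex_lower_cover[w jw yw].
by rewrite (join_irr_covers_eq jJ jc jw).
Qed.

Lemma top_meet_irrN t : (forall z, z <= t) -> ~~ meet_irr t.
Proof.
move=> t_top; apply/meet_irrP=> -[u Hu]; have /andP[tu _] : covers u t by rewrite Hu.
by have := lt_geF tu; rewrite t_top.
Qed.

Lemma covers_lt_le_eq t x y : covers t x -> x < y -> y <= t -> y = t.
Proof.
case/andP=> _ /forallP/(_ y) between xy yt; apply/eqP; rewrite eq_le yt /=.
by apply: contraNT between => ty; rewrite xy lt_leAnge yt.
Qed.

Lemma covers_antichain t x y : covers t x -> covers t y -> x <= y -> x = y.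
Proof.
move=> tx /andP[yt _]; rewrite le_eqVlt => /predU1P[//|xy].
by have := covers_lt_le_eq tx xy (ltW yt) => y_t; rewrite y_t ltxx in yt.
Qed.

Lemma ex_lt_top t : (1 < #|P|)%N -> (forall z, z <= t) -> exists y, y < t.
Proof.
move=> P_gt1 t_top; have [a [b [_ _ ab]]] := card_gt1P P_gt1.
case: (eqVneq a t) => [a_t|]; [exists b | exists a]; rewrite lt_neqAle t_top andbT //.
by rewrite -a_t eq_sym.
Qed.

Lemma coatom_meet_irr t y : (forall z, z <= t) -> covers t y -> meet_irr y.
Proof.
move=> t_top ty; apply/meet_irrP; exists t => u; apply/idP/eqP=> [/andP[yu _]|->//].
exact: covers_lt_le_eq ty yu (t_top u).
Qed.

End FinPOrder.

Section FinLattice.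
Variables (d : Order.disp_t) (L : finLatticeType d).
Implicit Types (c j t w x y z : L) (s : seq L).

Lemma meet_irr_ltI z x y : meet_irr z -> z < x -> z < y -> z < x `&` y.
Proof.
move=> zM /lt_ex_upper_cover[u zu ux] /lt_ex_upper_cover[v zv vy].
rewrite -(meet_irr_covers_eq zM zu zv) in vy.
by case/andP: zu => zu _; apply: lt_le_trans zu _; rewrite lexI ux vy.
Qed.

Lemma meet_irrNI x y : ~~ meet_irr x -> ~~ meet_irr y -> ~~ meet_irr (x `&` y).
Proof.
move=> xN yN; apply/negP=> xyM.
have xy_x : x `&` y < x by rewrite lt_neqAle leIl andbT; apply: contraNneq xN => <-.
have xy_y : x `&` y < y by rewrite lt_neqAle leIr andbT; apply: contraNneq yN => <-.
by have := meet_irr_ltI xyM xy_x xy_y; rewrite ltxx.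
Qed.

Lemma covers_meet_lt t x y : covers t x -> covers t y -> x != y -> x `&` y < x.
Proof.
move=> tx ty xy; rewrite lt_neqAle leIl andbT.
by apply: contraNneq xy => /eqP; rewrite -leEmeet => /(covers_antichain tx ty)->.
Qed.

(* The seed [x] only supplies an inhabitant; the result is the top of [L]. *)
Definition top_of x : L := foldr Order.join x (enum L).

Lemma le_top_of x z : z <= top_of x.
Proof.
have : z \in enum L by rewrite mem_enum.
rewrite /top_of; elim: (enum L) => //= a s IH; rewrite inE => /predU1P[->|/IH zs].
  exact: leUl.
exact: le_trans zs (leUr _ _).
Qed.

Lemma top_join_irr t : (1 < #|L|)%N -> (forall z, z <= t) ->
  (forall y, y < t -> meet_irr y) -> join_irr t.
Proof.
move=> L_gt1 t_top below_M; have [y0 y0t] := ex_lt_top L_gt1 t_top.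
have [c tc _] := lt_ex_lower_cover y0t.
apply/join_irrP; exists c => y; apply/idP/eqP => [ty|-> //].
case: (eqVneq y c) => // yc; have /andP[yt _] := ty.
have yc_t : y `&` c < t by apply: le_lt_trans yt; apply: leIl.
have yc_c : y `&` c < c by rewrite meetC; apply: covers_meet_lt tc ty _; rewrite eq_sym.
by have := meet_irr_ltI (below_M _ yc_t) (covers_meet_lt ty tc yc) yc_c; rewrite ltxx.
Qed.

Lemma le_foldr_meet w t s : w <= t -> all (>= w) s -> w <= foldr Order.meet t s.
Proof. by move=> wt; elim: s => //= a s IH /andP[wa /IH ws]; rewrite lexI wa ws. Qed.

Lemma foldr_meet_le z t s : z \in s -> foldr Order.meet t s <= z.
Proof.
elim: s => //= a s IH; rewrite inE => /predU1P[->|/IH sz]; first exact: leIl.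
exact: le_trans (leIr _ _) sz.
Qed.

Lemma foldr_meet_nonmi t s : ~~ meet_irr t -> all (fun z => ~~ meet_irr z) s ->
  ~~ meet_irr (foldr Order.meet t s).
Proof. by move=> tN; elim: s => //= a s IH /andP[aN /IH sN]; apply: meet_irrNI. Qed.

Definition nonmi_hull x y : L :=
  foldr Order.meet (top_of x) [seq z <- enum L | ~~ meet_irr z && (x <= z) && (y <= z)].

Lemma nonmi_hullN x y : ~~ meet_irr (nonmi_hull x y).
Proof.
apply: foldr_meet_nonmi; first by apply/top_meet_irrN/le_top_of.
by apply/allP=> z; rewrite mem_filter => /andP[/andP[/andP[]]].
Qed.

Lemma nonmi_hull_le x y z : ~~ meet_irr z -> (nonmi_hull x y <= z) = (x <= z) && (y <= z).
Proof.
move=> zN; apply/idP/andP=> [hull_z|[xz yz]]; last first.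
  by apply: foldr_meet_le; rewrite mem_filter zN xz yz mem_enum.
have [x_hull y_hull] : x <= nonmi_hull x y /\ y <= nonmi_hull x y.
  by split; apply: le_foldr_meet; rewrite ?le_top_of //; apply/allP=> v;
    rewrite mem_filter => /andP[/andP[/andP[_ xv yv] _]].
by rewrite (le_trans x_hull hull_z) (le_trans y_hull hull_z).
Qed.

Lemma join_irr_of_lt_le j c : ~~ (j <= c) -> (forall y, y < j -> y <= c) -> join_irr j.
Proof.
move=> jc below_c.
have jc_j : j `&` c < j by rewrite lt_neqAle leIl andbT; apply: contraNneq jc => <-; apply: leIr.
have [y1 jy1 _] := lt_ex_lower_cover jc_j; have /andP[y1j _] := jy1.
apply/join_irrP; exists y1 => y; apply/idP/eqP => [jy|-> //]; have /andP[yj _] := jy.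
case: (eqVneq y y1) => // yy1; case/negP: jc.
have y_yy1 : y < y `|` y1.
  rewrite lt_neqAle leUl andbT; apply: contraNneq yy1 => /eqP.
  by rewrite eq_sym joinC -leEjoin => /(covers_antichain jy1 jy) ->.
have <- : y `|` y1 = j by apply: covers_lt_le_eq jy y_yy1 _; rewrite leUx !ltW.
by rewrite leUx !below_c.
Qed.

Definition nonmi := {x : L | ~~ meet_irr x}.

End FinLattice.

HB.instance Definition _ d (L : finLatticeType d) :=
  [isSub of nonmi L for @sval L (fun x => ~~ meet_irr x)].
HB.instance Definition _ d (L : finLatticeType d) := [Finite of nonmi L by <:].
HB.instance Definition _ d (L : finLatticeType d) :=
  [SubChoice_isSubPOrder of nonmi L by <: with d].

Section NonMeetIrreducibleLattice.
Variables (d : Order.disp_t) (L : finLatticeType d).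
Implicit Types x y z : nonmi L.

Definition nonmi_meet x y : nonmi L := Sub (val x `&` val y) (meet_irrNI (valP x) (valP y)).

Definition nonmi_join x y : nonmi L := Sub (nonmi_hull (val x) (val y)) (nonmi_hullN _ _).

Lemma nonmi_meetP x y z : (x <= nonmi_meet y z) = (x <= y) && (x <= z).
Proof. by rewrite -!Order.le_val SubK lexI. Qed.

Lemma nonmi_joinP x y z : (nonmi_join x y <= z) = (x <= z) && (y <= z).
Proof. by rewrite -!Order.le_val SubK nonmi_hull_le ?(valP z). Qed.

End NonMeetIrreducibleLattice.

HB.instance Definition _ d (L : finLatticeType d) :=
  Order.POrder_MeetJoin_isLattice.Build d (nonmi L) (@nonmi_meetP d L) (@nonmi_joinP d L).

Section NonMeetIrreducibleCounting.
Variables (d : Order.disp_t) (L : finLatticeType d).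

Lemma card_nonmi_set (p : pred L) :
  #|[set x : nonmi L | p (val x)]| = #|[set x : L | ~~ meet_irr x & p x]|.
Proof.
have -> : [set x : L | ~~ meet_irr x & p x] = val @: [set x : nonmi L | p (val x)].
  apply/setP=> x; rewrite inE; apply/andP/imsetP => [[xN px]|[y]].
    by exists (Sub x xN); rewrite ?inE SubK.
  by rewrite inE => py ->; split; first exact: (valP y).
by rewrite card_imset //; apply: val_inj.
Qed.

Lemma card_nonmi : (#|{: nonmi L}| + #|[set m : L | meet_irr m]|)%N = #|L|.
Proof.
rewrite card_sub -(cardC [set m : L | meet_irr m]) addnC; congr (_ + _).
by apply: eq_card => x; rewrite !inE.
Qed.

Lemma card_nonmi_lt : (1 < #|L|)%N -> (#|{: nonmi L}| < #|L|)%N.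
Proof.
move=> L_gt1; have [a _] := card_gt0P (ltnW L_gt1).
have t_top : forall z, z <= top_of a := le_top_of a.
have [y yt] := ex_lt_top L_gt1 t_top; have [c tc _] := lt_ex_lower_cover yt.
rewrite -card_nonmi -[X in (X < _)%N]addn0 ltn_add2l; apply/card_gt0P.
by exists c; rewrite inE (coatom_meet_irr t_top tc).
Qed.

Lemma card_nonmi_gt1 : counterexample L -> (1 < #|{: nonmi L}|)%N.
Proof.
move=> [L_gt1 L_ce]; rewrite ltnNge; apply/negP=> /card_le1_eqP nonmi_triv.
have [a _] := card_gt0P (ltnW L_gt1); pose t := top_of a.
have t_top : forall z, z <= t := le_top_of a.
have tN : ~~ meet_irr t := top_meet_irrN t_top.
have below_M y : y < t -> meet_irr y.
  move=> yt; apply: contraTT yt => yN.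
  by have := nonmi_triv (Sub y yN) (Sub t tN); rewrite !inE => /(_ isT isT) [->]; rewrite ltxx.
have := L_ce t (top_join_irr L_gt1 t_top below_M).
have -> : upset t = [set t] by apply/setP=> x; rewrite !inE eq_le t_top.
by rewrite cards1 ltnNge L_gt1.
Qed.

Lemma join_irr_lift (j' : nonmi L) : join_irr j' ->
  exists2 j : L, join_irr j & forall x : nonmi L, (j <= val x) = (j' <= x).
Proof.
move=> j'J; have [c' j'c'] : exists c', covers j' c'.
  by case/join_irrP: j'J => c' c'_cover; exists c'; rewrite c'_cover.
have c'j' : val c' < val j' by rewrite lt_val; case/andP: j'c'.
have /(@ex_minimal _ _ (fun z => (z <= val j') && ~~ (z <= val c')))[j /andP[jj' jc'] j_min] :
  (val j' <= val j') && ~~ (val j' <= val c') by rewrite lexx lt_geF.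
have below_c' y : y < j -> y <= val c'.
  move=> yj; apply/negPn/negP => yc'.
  by have := j_min y yj; rewrite (le_trans (ltW yj) jj') yc'.
exists j; first exact: join_irr_of_lt_le jc' below_c'.
move=> x; apply/idP/idP => [jx|j'x]; last by apply: le_trans jj' _; rewrite Order.le_val.
case: (eqVneq (x `&` j') j') => [<-|xj'_neq]; first exact: leIl.
have xj'_j' : x `&` j' < j' by rewrite lt_neqAle xj'_neq leIr.
have := join_irr_lt_le_cover j'J j'c' xj'_j'; rewrite -Order.le_val /= => xj'_c'.
by case/negP: jc'; apply: le_trans xj'_c'; rewrite lexI jx jj'.
Qed.

End NonMeetIrreducibleCounting.

Lemma not_counterexample d (L : finLatticeType d) : (1 < #|L|)%N -> ~ counterexample L ->
  exists2 j : L, join_irr j & (2 * #|upset j| <= #|L|)%N.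
Proof.
move=> L_gt1 L_nce.
have /existsP[j /andP[jJ j_small]] : [exists j : L, join_irr j && (2 * #|upset j| <= #|L|)%N].
  apply: contraT => /existsPn no_small; case: L_nce; split=> // j jJ.
  by move: (no_small j); rewrite jJ ltnNge.
by exists j.
Qed.

Theorem corollary2p10 (d : Order.disp_t) (L : finLatticeType d) :
  min_counterexample L ->
  exists j : L, join_irr j /\
    (#|[set m : L | meet_irr m]| < 2 * #|[set m : L | meet_irr m && (j <= m)%O]|)%N.
Proof.
move=> [L_ce L_min]; have [L_gt1 _] := L_ce.
have [j' j'J j'_small] := not_counterexample (card_nonmi_gt1 L_ce)
  (L_min _ _ (card_nonmi_lt L_gt1)).
have [j jJ j_lift] := join_irr_lift j'J.
exists j; split=> //.
have card_up_j' : #|upset j'| = #|[set x : L | ~~ meet_irr x & j <= x]|.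
  by rewrite -card_nonmi_set; apply: eq_card => x; rewrite !inE j_lift.
have card_up_j : #|upset j| = (#|[set x : L | ~~ meet_irr x & (j <= x)%O]| +
                               #|[set m : L | meet_irr m && (j <= m)%O]|)%N.
  rewrite -(cardsID [set m : L | meet_irr m] (upset j)) addnC.
  by congr (_ + _); apply: eq_card => x; rewrite !inE andbC.
have := L_ce.2 j jJ; rewrite -(card_nonmi L) card_up_j mulnDr => /leq_trans.
by rewrite card_up_j' in j'_small => /(_ _ (leq_add j'_small (leqnn _))); rewrite ltn_add2l.
Qed.
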